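(* The relation $\equiv_m$ of $m$-equivalence on $2^\mathbb{N}$ is $\Pi^0_2$-graphable with diameter $2$.
   Context: Subsets of $\mathbb{N}$ are identified with elements of $2^\mathbb{N}$. An $m$-reduction from $A$ to $B$ is a total computable $f:\mathbb{N}\to\mathbb{N}$ with $n\in A\iff f(n)\in B$ for all $n$; $A\le_m B$ if one exists, and $A\equiv_m B$ iff $A\le_m B$ and $B\le_m A$. An equivalence relation $E$ on a space $X$ is $\Gamma$-graphable (for a pointclass $\Gamma$, here lightface $\Pi^0_2$) if there is a simple undirected graph $G\subseteq X\times X$ in $\Gamma$ whose connectedness relation equals $E$; it is $\Gamma$-graphable with diameter $k$ if such a $G$ exists in which $k$ is the least integer such that any two $G$-connected points are joined by a path of length at most $k$. *)

From Stdlib Require Import List Arith.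
Import ListNotations.

Inductive recf : Type :=
| RZero : recf
| RSucc : recf
| RProj : nat -> recf                   (* i-th argument (0 if absent) *)
| RComp : recf -> list recf -> recf
| RPrec : recf -> recf -> recf          (* primitive recursion on first arg *)
| RMu   : recf -> recf.

Inductive eval : recf -> list nat -> nat -> Prop :=
| ev_zero : forall l, eval RZero l 0
| ev_succ : forall l, eval RSucc l (S (hd 0 l))
| ev_proj : forall i l, eval (RProj i) l (nth i l 0)
| ev_comp : forall f gs l vs v,
    evals gs l vs -> eval f vs v -> eval (RComp f gs) l v
| ev_prec0 : forall f g l v,
    eval f l v -> eval (RPrec f g) (0 :: l) v
| ev_precS : forall f g n l z v,
    eval (RPrec f g) (n :: l) z -> eval g (n :: z :: l) v ->
    eval (RPrec f g) (S n :: l) v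
| ev_mu : forall f l n,
    eval f (n :: l) 0 ->
    (forall m, m < n -> exists k, eval f (m :: l) (S k)) ->
    eval (RMu f) l n
with evals : list recf -> list nat -> list nat -> Prop :=
| evs_nil : forall l, evals [] l []
| evs_cons : forall g gs l v vs,
    eval g l v -> evals gs l vs -> evals (g :: gs) l (v :: vs).

Definition computable (f : nat -> nat) : Prop :=
  exists p : recf, forall n, eval p [n] (f n).

Definition cantor := nat -> bool.

Definition mred (A B : cantor) : Prop :=
  exists f : nat -> nat, computable f /\ forall n, A n = B (f n).

Definition meq (A B : cantor) : Prop := mred A B /\ mred B A.

(* Code of the finite prefix x|m = x(0)...x(m-1) as a natural number
   (binary with a leading 1):  2^m + sum_{i<m} x(i) 2^i.  Injective on
   finite binary strings. *)
Fixpoint prefix_code (x : cantor) (m : nat) : nat :=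
  match m with
  | 0 => 1
  | S m' => 2 * prefix_code (fun i => x (S i)) m' + (if x 0 then 1 else 0)
  end.

(* Lightface Pi^0_2 subsets of 2^N x 2^N:  P(x,y) <-> forall n, exists m,
   R(n, m, x|m, y|m) for a (total) computable relation R, here given by
   a total mu-recursive program p with R = "p outputs 0". *)
Definition pi02_2 (P : cantor -> cantor -> Prop) : Prop :=
  exists p : recf,
    (forall n m a b, exists v, eval p [n; m; a; b] v) /\
    (forall x y, P x y <->
       forall n, exists m, eval p [n; m; prefix_code x m; prefix_code y m] 0).

Definition simple_graph {X : Type} (G : X -> X -> Prop) : Prop :=
  (forall x y, G x y -> G y x) /\ (forall x, ~ G x x).

Fixpoint walk {X : Type} (G : X -> X -> Prop) (k : nat) (x y : X) : Prop :=
  match k with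
  | 0 => x = y
  | S k' => exists z, G x z /\ walk G k' z y
  end.

Definition connected {X : Type} (G : X -> X -> Prop) (x y : X) : Prop :=
  exists k, walk G k x y.

Definition diam_le {X : Type} (G : X -> X -> Prop) (k : nat) : Prop :=
  forall x y, connected G x y -> exists j, j <= k /\ walk G j x y.

Definition diameter {X : Type} (G : X -> X -> Prop) (k : nat) : Prop :=
  diam_le G k /\ forall j, j < k -> ~ diam_le G j.

Definition pi02_graphable_diam (E : cantor -> cantor -> Prop) (k : nat) : Prop :=
  exists G : cantor -> cantor -> Prop,
    pi02_2 G /\ simple_graph G /\
    (forall x y, connected G x y <-> E x y) /\
    diameter G k.

(* A point of Cantor space beginning with exactly [c] ones is assigned the number [c].
   Two points are adjacent when their numbers differ and the larger one, say [c] for [u],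
   makes [u] a hub for the other point [v]: [c] packs two programs which, given [k] and one
   bit of [v], compute m-reductions of [v] to [u] and of [u] to [v] at [k].  Adjacency says
   that these computations halt with correct values for every [k]; running programs on a
   step-bounded universal machine against finite prefixes makes it Pi^0_2.  Adjacent points
   are m-equivalent.  Conversely, if [x] and [y] are m-equivalent and differ at [d], then
   [1^c 0 x] is adjacent to both for a large enough [c] whose programs use the bit at [d]
   to tell [x] from [y].  The diameter is not 1 because [0100...] and [0010...] are
   m-equivalent, distinct, and both have number 0. *)

From Stdlib Require Import List Arith Bool Lia Cantor Wf_nat.
From Stdlib Require Import Classical FunctionalExtensionality ClassicalEpsilon.
Import ListNotations.

(** * Evaluation of mu-recursive programs *)

(* [Scheme] cannot derive this principle: the premise of [ev_mu] nests
   [eval] under a universal and an existential quantifier. *)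
Section EvalMutInd.
Variable P : recf -> list nat -> nat -> Prop.
Variable Q : list recf -> list nat -> list nat -> Prop.
Hypothesis P_zero : forall l, P RZero l 0.
Hypothesis P_succ : forall l, P RSucc l (S (hd 0 l)).
Hypothesis P_proj : forall i l, P (RProj i) l (nth i l 0).
Hypothesis P_comp : forall f gs l vs v,
  evals gs l vs -> Q gs l vs -> eval f vs v -> P f vs v -> P (RComp f gs) l v.
Hypothesis P_prec0 : forall f g l v,
  eval f l v -> P f l v -> P (RPrec f g) (0 :: l) v.
Hypothesis P_precS : forall f g n l z v,
  eval (RPrec f g) (n :: l) z -> P (RPrec f g) (n :: l) z ->
  eval g (n :: z :: l) v -> P g (n :: z :: l) v -> P (RPrec f g) (S n :: l) v.
Hypothesis P_mu : forall f l n,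
  eval f (n :: l) 0 -> P f (n :: l) 0 ->
  (forall m, m < n -> exists k, eval f (m :: l) (S k) /\ P f (m :: l) (S k)) ->
  P (RMu f) l n.
Hypothesis Q_nil : forall l, Q [] l [].
Hypothesis Q_cons : forall g gs l v vs,
  eval g l v -> P g l v -> evals gs l vs -> Q gs l vs -> Q (g :: gs) l (v :: vs).

Fixpoint eval_mut_ind p l v (H : eval p l v) {struct H} : P p l v :=
  match H in eval p l v return P p l v with
  | ev_zero l => P_zero l
  | ev_succ l => P_succ l
  | ev_proj i l => P_proj i l
  | ev_comp f gs l vs v Hgs Hf =>
      P_comp f gs l vs v Hgs (evals_mut_ind _ _ _ Hgs) Hf (eval_mut_ind _ _ _ Hf)
  | ev_prec0 f g l v Hf => P_prec0 f g l v Hf (eval_mut_ind _ _ _ Hf)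
  | ev_precS f g n l z v Hn Hg =>
      P_precS f g n l z v Hn (eval_mut_ind _ _ _ Hn) Hg (eval_mut_ind _ _ _ Hg)
  | ev_mu f l n H0 Hlt =>
      P_mu f l n H0 (eval_mut_ind _ _ _ H0)
        (fun m Hm => match Hlt m Hm with
                     | ex_intro _ k Hk => ex_intro _ k (conj Hk (eval_mut_ind _ _ _ Hk))
                     end)
  end
with evals_mut_ind gs l vs (H : evals gs l vs) {struct H} : Q gs l vs :=
  match H in evals gs l vs return Q gs l vs with
  | evs_nil l => Q_nil l
  | evs_cons g gs l v vs Hg Hgs =>
      Q_cons g gs l v vs Hg (eval_mut_ind _ _ _ Hg) Hgs (evals_mut_ind _ _ _ Hgs)
  end.

End EvalMutInd.

Lemma eval_functional p l v : eval p l v -> forall v', eval p l v' -> v = v'.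
Proof.
  revert p l v.
  apply (eval_mut_ind (fun p l v => forall v', eval p l v' -> v = v')
                      (fun gs l vs => forall vs', evals gs l vs' -> vs = vs')).
  - intros l v' H; inversion H; auto.
  - intros l v' H; inversion H; auto.
  - intros i l v' H; inversion H; auto.
  - intros f gs l vs v _ IHgs _ IHf v' H; inversion H; subst.
    match goal with Hx : evals gs l ?w |- _ => apply IHgs in Hx end; subst; auto.
  - intros f g l v _ IH v' H; inversion H; subst; auto.
  - intros f g n l z v _ IHn _ IHg v' H; inversion H; subst.
    match goal with Hx : eval (RPrec f g) (n :: l) ?w |- _ => apply IHn in Hx end; subst; auto.
  - intros f l n _ IH0 IHlt v' H; inversion H; subst.
    destruct (lt_eq_lt_dec n v') as [[Hlt|Heq]|Hlt]; auto.
    + match goal with Hx : forall m, m < v' -> _ |- _ => destruct (Hx n Hlt) as [k Hk] end.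
      apply IH0 in Hk; discriminate.
    + destruct (IHlt v' Hlt) as [k [_ Hk]].
      match goal with Hx : eval f (v' :: l) 0 |- _ => apply Hk in Hx end; discriminate.
  - intros l vs' H; inversion H; auto.
  - intros g gs l v vs _ IHg _ IHgs vs' H; inversion H; subst; f_equal; auto.
Qed.

Definition comp1 q a := RComp q [a].
Definition comp2 q a b := RComp q [a; b].
Definition comp3 q a b c := RComp q [a; b; c].

Lemma eval_comp1 q a l x y : eval a l x -> eval q [x] y -> eval (comp1 q a) l y.
Proof. intros. eapply ev_comp; eauto. repeat constructor; auto. Qed.

Lemma eval_comp2 q a b l x x' y :
  eval a l x -> eval b l x' -> eval q [x; x'] y -> eval (comp2 q a b) l y.
Proof. intros. eapply ev_comp; eauto. repeat constructor; auto. Qed.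

Lemma eval_comp3 q a b c l x x' x'' y :
  eval a l x -> eval b l x' -> eval c l x'' -> eval q [x; x'; x''] y ->
  eval (comp3 q a b c) l y.
Proof. intros. eapply ev_comp; eauto. repeat constructor; auto. Qed.

Lemma eval_proj i l v : nth i l 0 = v -> eval (RProj i) l v.
Proof. intros <-; constructor. Qed.

Lemma eval_succ a l x : eval a l x -> eval (comp1 RSucc a) l (S x).
Proof. intros. eapply eval_comp1; eauto. apply ev_succ. Qed.

Lemma eval_val_eq p l v w : eval p l v -> v = w -> eval p l w.
Proof. intros ? <-; auto. Qed.

Definition add_rf := RPrec (RProj 0) (comp1 RSucc (RProj 1)).

Lemma eval_add_rf a b : eval add_rf [a; b] (a + b).
Proof.
  induction a.
  - apply ev_prec0, eval_proj; reflexivity.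
  - eapply ev_precS; [apply IHa|]. apply eval_succ, eval_proj; reflexivity.
Qed.

Definition pred_rf := RPrec RZero (RProj 0).

Lemma eval_pred_rf a : eval pred_rf [a] (pred a).
Proof.
  induction a.
  - apply ev_prec0, ev_zero.
  - eapply ev_precS; [apply IHa|]. apply eval_proj; reflexivity.
Qed.

(* Primitive recursion runs on the first argument, so the subtrahend comes first. *)
Definition sub_rev_rf := RPrec (RProj 0) (comp1 pred_rf (RProj 1)).
Definition sub_rf := comp2 sub_rev_rf (RProj 1) (RProj 0).

Lemma eval_sub_rf a b : eval sub_rf [a; b] (a - b).
Proof.
  assert (Hrev : forall m n, eval sub_rev_rf [m; n] (n - m)).
  { induction m as [|m IHm]; intros n.
    - apply ev_prec0, eval_proj; simpl; lia.
    - eapply ev_precS; [apply IHm|].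
      eapply eval_val_eq; [eapply eval_comp1; [apply eval_proj; reflexivity|apply eval_pred_rf]|].
      simpl; lia. }
  eapply eval_comp2; [apply eval_proj; reflexivity|apply eval_proj; reflexivity|apply Hrev].
Qed.

Definition ifz_rf := RPrec (RProj 0) (RProj 3).

Lemma eval_ifz_rf c t e : eval ifz_rf [c; t; e] (match c with 0 => t | S _ => e end).
Proof.
  assert (Htot : forall n, exists z, eval ifz_rf [n; t; e] z).
  { intros n; induction n as [|n [z Hz]]; eexists.
    - apply ev_prec0, eval_proj; reflexivity.
    - eapply ev_precS; [apply Hz|apply ev_proj]. }
  destruct c as [|c].
  - apply ev_prec0, eval_proj; reflexivity.
  - destruct (Htot c) as [z Hz]. eapply ev_precS; [apply Hz|apply eval_proj; reflexivity].
Qed.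

Fixpoint const_rf n := match n with 0 => RZero | S m => comp1 RSucc (const_rf m) end.

Lemma eval_const_rf n l : eval (const_rf n) l n.
Proof. induction n; simpl. apply ev_zero. apply eval_succ; auto. Qed.

Definition absdiff_rf a b := comp2 add_rf (comp2 sub_rf a b) (comp2 sub_rf b a).

Lemma eval_absdiff_rf a b l x y :
  eval a l x -> eval b l y -> eval (absdiff_rf a b) l ((x - y) + (y - x)).
Proof.
  intros. eapply eval_comp2; [eapply eval_comp2; eauto; apply eval_sub_rf
                              |eapply eval_comp2; eauto; apply eval_sub_rf|apply eval_add_rf].
Qed.

(** * Cantor pairing *)

Definition cpair (a b : nat) : nat := Cantor.to_nat (a, b).
Definition cfst (n : nat) : nat := fst (Cantor.of_nat n).
Definition csnd (n : nat) : nat := snd (Cantor.of_nat n).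

Arguments cpair : simpl never.
Arguments cfst : simpl never.
Arguments csnd : simpl never.

Lemma cfst_pair a b : cfst (cpair a b) = a.
Proof. unfold cfst, cpair. now rewrite Cantor.cancel_of_to. Qed.

Lemma csnd_pair a b : csnd (cpair a b) = b.
Proof. unfold csnd, cpair. now rewrite Cantor.cancel_of_to. Qed.

Lemma cpair_surj n : cpair (cfst n) (csnd n) = n.
Proof. unfold cpair, cfst, csnd. rewrite <- surjective_pairing. apply Cantor.cancel_to_of. Qed.

Lemma cpair_ge a b : a <= cpair a b /\ b <= cpair a b.
Proof. pose proof (Cantor.to_nat_non_decreasing a b). unfold cpair. lia. Qed.

Fixpoint tri n := match n with 0 => 0 | S m => tri m + S m end.

Lemma cpair_tri a b : cpair a b = tri (a + b) + b.
Proof.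
  unfold cpair, Cantor.to_nat. rewrite (Nat.add_comm b a).
  induction (a + b) as [|n IHn]; simpl in *; lia.
Qed.

Lemma tri_lt a b : a < b -> tri a + a < tri b.
Proof. induction 1; simpl; lia. Qed.

Fixpoint diag n :=
  match n with
  | 0 => 0
  | S n' => if tri (S (diag n')) =? S n' then S (diag n') else diag n'
  end.

Lemma diag_spec n : tri (diag n) <= n < tri (S (diag n)).
Proof.
  induction n; simpl; [lia|].
  destruct (Nat.eqb_spec (tri (diag n) + S (diag n)) (S n)); simpl in *; lia.
Qed.

Lemma diag_unique n w : tri w <= n < tri (S w) -> diag n = w.
Proof.
  intros H. pose proof (diag_spec n).
  destruct (lt_eq_lt_dec (diag n) w) as [[Hl|]|Hl]; auto;
    apply tri_lt in Hl; simpl in *; lia.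
Qed.

Lemma cfst_csnd_diag n : csnd n = n - tri (diag n) /\ cfst n = diag n - csnd n.
Proof.
  pose proof (cpair_tri (cfst n) (csnd n)) as Hn. rewrite cpair_surj in Hn.
  assert (Hd : diag n = cfst n + csnd n) by (apply diag_unique; simpl; lia).
  rewrite Hd; lia.
Qed.

Definition tri_rf := RPrec RZero (comp2 add_rf (RProj 1) (comp1 RSucc (RProj 0))).

Lemma eval_tri_rf n : eval tri_rf [n] (tri n).
Proof.
  induction n; [apply ev_prec0, ev_zero|].
  eapply ev_precS; [apply IHn|].
  eapply eval_comp2; [apply eval_proj; reflexivity|apply eval_succ, eval_proj; reflexivity|].
  apply eval_add_rf.
Qed.

Lemma ifz_eqb {A} x y (t e : A) :
  match (x - y) + (y - x) with 0 => t | S _ => e end = if x =? y then t else e.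
Proof.
  destruct (Nat.eqb_spec x y) as [<-|]; [now rewrite Nat.sub_diag|].
  destruct (x - y + (y - x)) eqn:E; [lia|reflexivity].
Qed.

Definition diag_rf := RPrec RZero
  (comp3 ifz_rf (absdiff_rf (comp1 tri_rf (comp1 RSucc (RProj 1))) (comp1 RSucc (RProj 0)))
                (comp1 RSucc (RProj 1)) (RProj 1)).

Lemma eval_diag_rf n : eval diag_rf [n] (diag n).
Proof.
  induction n; [apply ev_prec0, ev_zero|].
  eapply ev_precS; [apply IHn|].
  eapply eval_comp3.
  - apply eval_absdiff_rf; [|apply eval_succ, eval_proj; reflexivity].
    eapply eval_comp1; [apply eval_succ, eval_proj; reflexivity|apply eval_tri_rf].
  - apply eval_succ, eval_proj; reflexivity.
  - apply eval_proj; reflexivity.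
  - eapply eval_val_eq; [apply eval_ifz_rf|]. apply ifz_eqb.
Qed.

Definition csnd_rf := comp2 sub_rf (RProj 0) (comp1 tri_rf diag_rf).
Definition cfst_rf := comp2 sub_rf diag_rf csnd_rf.
Definition cpair_rf := comp2 add_rf (comp1 tri_rf add_rf) (RProj 1).

Lemma eval_csnd_rf n : eval csnd_rf [n] (csnd n).
Proof.
  rewrite (proj1 (cfst_csnd_diag n)).
  eapply eval_comp2; [apply eval_proj; reflexivity| |apply eval_sub_rf].
  eapply eval_comp1; [apply eval_diag_rf|apply eval_tri_rf].
Qed.

Lemma eval_cfst_rf n : eval cfst_rf [n] (cfst n).
Proof.
  rewrite (proj2 (cfst_csnd_diag n)).
  eapply eval_comp2; [apply eval_diag_rf|apply eval_csnd_rf|apply eval_sub_rf].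
Qed.

Lemma eval_cpair_rf a b : eval cpair_rf [a; b] (cpair a b).
Proof.
  rewrite cpair_tri.
  eapply eval_comp2; [eapply eval_comp1; [apply eval_add_rf|apply eval_tri_rf]
                     |apply eval_proj; reflexivity|apply eval_add_rf].
Qed.

(** * Unary expressions *)

(* Several arguments are passed Cantor-paired into the single input; [EPrec n b s]
   iterates [r |-> s (cpair i (cpair r x))] for [i < n x], starting from [b x]. *)
Inductive expr : Type :=
| EIn
| EConst (n : nat)
| EAdd (a b : expr)
| ESub (a b : expr)
| EPair (a b : expr)
| EFst (a : expr)
| ESnd (a : expr)
| EIfz (c t e : expr)
| EPrec (n b s : expr)
| EComp (f a : expr).

Fixpoint denote (e : expr) (x : nat) : nat :=
  match e with
  | EIn => x
  | EConst n => n
  | EAdd a b => denote a x + denote b x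
  | ESub a b => denote a x - denote b x
  | EPair a b => cpair (denote a x) (denote b x)
  | EFst a => cfst (denote a x)
  | ESnd a => csnd (denote a x)
  | EIfz c t e => match denote c x with 0 => denote t x | S _ => denote e x end
  | EPrec n b s =>
      nat_rect (fun _ => nat) (denote b x) (fun i r => denote s (cpair i (cpair r x)))
        (denote n x)
  | EComp f a => denote f (denote a x)
  end.

Definition pack3_rf := comp2 cpair_rf (RProj 0) (comp2 cpair_rf (RProj 1) (RProj 2)).

Lemma eval_pack3_rf i r x : eval pack3_rf [i; r; x] (cpair i (cpair r x)).
Proof.
  eapply eval_comp2; [apply eval_proj; reflexivity| |apply eval_cpair_rf].
  eapply eval_comp2; [apply eval_proj; reflexivity|apply eval_proj; reflexivity|].
  apply eval_cpair_rf.
Qed.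

Fixpoint compile (e : expr) : recf :=
  match e with
  | EIn => RProj 0
  | EConst n => const_rf n
  | EAdd a b => comp2 add_rf (compile a) (compile b)
  | ESub a b => comp2 sub_rf (compile a) (compile b)
  | EPair a b => comp2 cpair_rf (compile a) (compile b)
  | EFst a => comp1 cfst_rf (compile a)
  | ESnd a => comp1 csnd_rf (compile a)
  | EIfz c t e => comp3 ifz_rf (compile c) (compile t) (compile e)
  | EPrec n b s => comp2 (RPrec (compile b) (comp1 (compile s) pack3_rf)) (compile n) (RProj 0)
  | EComp f a => comp1 (compile f) (compile a)
  end.

Lemma eval_compile_prec b s x n :
  eval (compile b) [x] (denote b x) ->
  (forall y, eval (compile s) [y] (denote s y)) ->
  eval (RPrec (compile b) (comp1 (compile s) pack3_rf)) [n; x]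
    (nat_rect (fun _ => nat) (denote b x) (fun i r => denote s (cpair i (cpair r x))) n).
Proof.
  intros Hb Hs. induction n as [|n IHn]; simpl.
  - apply ev_prec0, Hb.
  - eapply ev_precS; [apply IHn|]. eapply eval_comp1; [apply eval_pack3_rf|apply Hs].
Qed.

Lemma eval_compile e l : eval (compile e) l (denote e (nth 0 l 0)).
Proof.
  revert l; induction e; intros l; simpl.
  - apply eval_proj; reflexivity.
  - apply eval_const_rf.
  - eapply eval_comp2; eauto. apply eval_add_rf.
  - eapply eval_comp2; eauto. apply eval_sub_rf.
  - eapply eval_comp2; eauto. apply eval_cpair_rf.
  - eapply eval_comp1; eauto. apply eval_cfst_rf.
  - eapply eval_comp1; eauto. apply eval_csnd_rf.
  - eapply eval_comp3; eauto. apply eval_ifz_rf.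
  - eapply eval_comp2; [apply IHe1|apply eval_proj; reflexivity|].
    apply eval_compile_prec; [apply (IHe2 [_])|intros y; apply (IHe3 [_])].
  - eapply eval_comp1; eauto.
Qed.

Lemma eval_compile1 e x : eval (compile e) [x] (denote e x).
Proof. apply (eval_compile e [x]). Qed.

Section DenoteEquations.
Variables (a b c : expr) (x : nat).
Lemma denote_EIn : denote EIn x = x. Proof. reflexivity. Qed.
Lemma denote_EConst n : denote (EConst n) x = n. Proof. reflexivity. Qed.
Lemma denote_EAdd : denote (EAdd a b) x = denote a x + denote b x. Proof. reflexivity. Qed.
Lemma denote_ESub : denote (ESub a b) x = denote a x - denote b x. Proof. reflexivity. Qed.
Lemma denote_EPair : denote (EPair a b) x = cpair (denote a x) (denote b x).
Proof. reflexivity. Qed.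
Lemma denote_EFst : denote (EFst a) x = cfst (denote a x). Proof. reflexivity. Qed.
Lemma denote_ESnd : denote (ESnd a) x = csnd (denote a x). Proof. reflexivity. Qed.
Lemma denote_EIfz :
  denote (EIfz a b c) x = match denote a x with 0 => denote b x | S _ => denote c x end.
Proof. reflexivity. Qed.
Lemma denote_EComp : denote (EComp a b) x = denote a (denote b x). Proof. reflexivity. Qed.
End DenoteEquations.

#[local] Hint Rewrite denote_EIn denote_EConst denote_EAdd denote_ESub denote_EPair
  denote_EFst denote_ESnd denote_EIfz denote_EComp cfst_pair csnd_pair : denote.

Lemma denote_EPrec n b s x (F : nat -> nat) :
  F 0 = denote b x -> (forall i, F (S i) = denote s (cpair i (cpair (F i) x))) ->
  denote (EPrec n b s) x = F (denote n x).
Proof.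
  intros H0 HS. simpl. induction (denote n x) as [|k IHk]; simpl; congruence.
Qed.

Lemma denote_EPrec_iter n b s x (f : nat -> nat) :
  (forall i r, denote s (cpair i (cpair r x)) = f r) ->
  denote (EPrec n b s) x = Nat.iter (denote n x) f (denote b x).
Proof.
  intros Hs. apply (denote_EPrec n b s x (fun i => Nat.iter i f (denote b x))); auto.
Qed.

Arguments denote : simpl never.

Lemma iter_fixpoint {A} (f : A -> A) x k : f x = x -> Nat.iter k f x = x.
Proof. intros Hx. apply (Nat.iter_invariant k A f (fun y => y = x)); congruence. Qed.

Lemma computable_denote e : computable (denote e).
Proof. exists (compile e). apply eval_compile1. Qed.

Lemma computable_comp f g : computable f -> computable g -> computable (fun n => g (f n)).
Proof.
  intros [p Hp] [q Hq]. exists (comp1 q p). intros n. eapply eval_comp1; eauto.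
Qed.

Lemma computable_ext f g : (forall n, f n = g n) -> computable f -> computable g.
Proof. intros Hfg [p Hp]. exists p. intros n. rewrite <- Hfg. apply Hp. Qed.

Lemma computable_denote_pair e r :
  computable r -> computable (fun x => denote e (cpair (r x) x)).
Proof.
  intros [q Hq]. exists (comp1 (compile e) (comp2 cpair_rf q (RProj 0))). intros x.
  eapply eval_comp1; [|apply eval_compile1].
  eapply eval_comp2; [apply Hq|apply eval_proj; reflexivity|apply eval_cpair_rf].
Qed.

(** * Lists coded as numbers *)

Definition ccons x l := S (cpair x l).

Fixpoint clist (l : list nat) : nat :=
  match l with [] => 0 | x :: r => ccons x (clist r) end.

Definition chd n := match n with 0 => 0 | S y => cfst y end.
Definition ctl n := match n with 0 => 0 | S y => csnd y end.

Arguments chd : simpl never.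
Arguments ctl : simpl never.

Lemma chd_clist l : chd (clist l) = hd 0 l.
Proof. destruct l; simpl; auto. apply cfst_pair. Qed.

Lemma ctl_clist l : ctl (clist l) = clist (tl l).
Proof. destruct l; simpl; auto. apply csnd_pair. Qed.

Lemma length_le_clist l : length l <= clist l.
Proof.
  induction l as [|x l IHl]; simpl; auto.
  pose proof (cpair_ge x (clist l)). unfold ccons. lia.
Qed.

Definition hd_expr := EIfz EIn (EConst 0) (EFst (ESub EIn (EConst 1))).
Definition tl_expr := EIfz EIn (EConst 0) (ESnd (ESub EIn (EConst 1))).
Definition cons_expr a b := EAdd (EPair a b) (EConst 1).

Lemma denote_hd_expr x : denote hd_expr x = chd x.
Proof. unfold hd_expr, chd. autorewrite with denote. destruct x; auto. now rewrite Nat.sub_1_r. Qed.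

Lemma denote_tl_expr x : denote tl_expr x = ctl x.
Proof. unfold tl_expr, ctl. autorewrite with denote. destruct x; auto. now rewrite Nat.sub_1_r. Qed.

Lemma denote_cons_expr a b x : denote (cons_expr a b) x = S (cpair (denote a x) (denote b x)).
Proof. unfold cons_expr. autorewrite with denote. lia. Qed.

#[local] Hint Rewrite denote_hd_expr denote_tl_expr denote_cons_expr : denote.

Definition nth_expr :=
  EComp hd_expr (EPrec (EFst EIn) (ESnd EIn) (EComp tl_expr (EFst (ESnd EIn)))).

Lemma denote_nth_expr i l : denote nth_expr (cpair i (clist l)) = nth i l 0.
Proof.
  unfold nth_expr. rewrite denote_EComp, denote_hd_expr.
  rewrite (denote_EPrec_iter _ _ _ _ ctl).
  - autorewrite with denote. revert l. induction i as [|i IHi]; intros l.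
    + simpl. rewrite chd_clist. now destruct l.
    + rewrite Nat.iter_succ_r, ctl_clist, IHi. destruct l; simpl; auto. now destruct i.
  - intros. now autorewrite with denote.
Qed.

Definition rev_step r :=
  match cfst r with 0 => r | S _ => cpair (ctl (cfst r)) (ccons (chd (cfst r)) (csnd r)) end.

Lemma rev_step_done a : rev_step (cpair 0 a) = cpair 0 a.
Proof. unfold rev_step. now rewrite cfst_pair. Qed.

Lemma rev_step_cons x l a : rev_step (cpair (clist (x :: l)) a) = cpair (clist l) (ccons x a).
Proof.
  unfold rev_step. simpl clist. unfold ccons, chd, ctl. now rewrite !cfst_pair, !csnd_pair.
Qed.

Lemma iter_rev_step k l a : length l <= k ->
  Nat.iter k rev_step (cpair (clist l) (clist a)) = cpair 0 (clist (rev l ++ a)).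
Proof.
  revert l a; induction k as [|k IHk]; intros l a Hl.
  - destruct l; simpl in *; [reflexivity|lia].
  - rewrite Nat.iter_succ_r. destruct l as [|x l].
    + simpl clist. rewrite rev_step_done. apply iter_fixpoint, rev_step_done.
    + rewrite rev_step_cons. change (ccons x (clist a)) with (clist (x :: a)).
      rewrite IHk by (simpl in Hl; lia). simpl. now rewrite <- app_assoc.
Qed.

Definition rev_step_expr :=
  EIfz (EFst EIn) EIn
    (EPair (EComp tl_expr (EFst EIn)) (cons_expr (EComp hd_expr (EFst EIn)) (ESnd EIn))).
Definition rev_expr :=
  ESnd (EPrec EIn (EPair EIn (EConst 0)) (EComp rev_step_expr (EFst (ESnd EIn)))).

Lemma denote_rev_expr l : denote rev_expr (clist l) = clist (rev l).
Proof.
  unfold rev_expr. rewrite denote_ESnd, (denote_EPrec_iter _ _ _ _ rev_step).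
  - autorewrite with denote. change 0 with (clist []).
    rewrite iter_rev_step by apply length_le_clist. now rewrite csnd_pair, app_nil_r.
  - intros i r. unfold rev_step_expr, rev_step. autorewrite with denote.
    destruct (cfst r); auto.
Qed.

(** * A universal machine *)

Fixpoint recf_code (p : recf) : nat :=
  match p with
  | RZero => cpair 0 0
  | RSucc => cpair 1 0
  | RProj i => cpair 2 i
  | RComp f gs => cpair 3 (cpair (recf_code f) (clist (map recf_code gs)))
  | RPrec f g => cpair 4 (cpair (recf_code f) (recf_code g))
  | RMu f => cpair 5 (recf_code f)
  end.

(* A configuration [cpair C K] pairs a control [C], either [call p l] (run the program
   coded [p] on the coded argument list [l]) or [ret v], with a coded stack [K] of
   frames.  [comp_frame f gs l vs] still has to run the argument programs [gs] on [l],
   having computed the values [vs] (reversed) so far; [prec_frame g i n l] has reached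
   stage [i] of [n] of a recursion with parameters [l]; [mu_frame f i l] is testing [i]. *)
Definition call p l := cpair 0 (cpair p l).
Definition ret v := cpair 1 v.
Definition comp_frame f gs l vs := cpair 0 (cpair f (cpair gs (cpair l vs))).
Definition prec_frame g i n l := cpair 1 (cpair g (cpair i (cpair n l))).
Definition mu_frame f i l := cpair 2 (cpair f (cpair i l)).

Definition call_expr p l k := EPair (EPair (EConst 0) (EPair p l)) k.
Definition ret_expr v k := EPair (EPair (EConst 1) v) k.
Definition comp_frame_expr f gs l vs := EPair (EConst 0) (EPair f (EPair gs (EPair l vs))).
Definition prec_frame_expr g i n l := EPair (EConst 1) (EPair g (EPair i (EPair n l))).
Definition mu_frame_expr f i l := EPair (EConst 2) (EPair f (EPair i l)).

Definition control_expr := EFst EIn.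
Definition stack_expr := ESnd EIn.
Definition prog_expr := EFst (ESnd control_expr).
Definition args_expr := ESnd (ESnd control_expr).
Definition tag_expr := EFst prog_expr.
Definition fields_expr := ESnd prog_expr.
Definition val_expr := ESnd control_expr.
Definition frame_expr := EComp hd_expr stack_expr.
Definition rest_expr := EComp tl_expr stack_expr.
Definition frame_tag_expr := EFst frame_expr.
Definition frame_fields_expr := ESnd frame_expr.
Definition hd_of a := EComp hd_expr a.
Definition tl_of a := EComp tl_expr a.
Definition succ_of a := EAdd a (EConst 1).

(* The tags are tested in increasing order, so [t - k] vanishes exactly when [t = k]. *)
Definition call_step_expr :=
  EIfz tag_expr (ret_expr (EConst 0) stack_expr)
  (EIfz (ESub tag_expr (EConst 1)) (ret_expr (succ_of (hd_of args_expr)) stack_expr)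
  (EIfz (ESub tag_expr (EConst 2))
     (ret_expr (EComp nth_expr (EPair fields_expr args_expr)) stack_expr)
  (EIfz (ESub tag_expr (EConst 3))
     (EIfz (ESnd fields_expr) (call_expr (EFst fields_expr) (EConst 0) stack_expr)
        (call_expr (hd_of (ESnd fields_expr)) args_expr
           (cons_expr (comp_frame_expr (EFst fields_expr) (tl_of (ESnd fields_expr))
                         args_expr (EConst 0)) stack_expr)))
  (EIfz (ESub tag_expr (EConst 4))
     (EIfz args_expr EIn
        (call_expr (EFst fields_expr) (tl_of args_expr)
           (cons_expr (prec_frame_expr (ESnd fields_expr) (EConst 0) (hd_of args_expr)
                         (tl_of args_expr)) stack_expr)))
  (EIfz (ESub tag_expr (EConst 5))
     (call_expr fields_expr (cons_expr (EConst 0) args_expr)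
        (cons_expr (mu_frame_expr fields_expr (EConst 0) args_expr) stack_expr))
  EIn))))).

Definition ret_step_expr :=
  let f1 := EFst frame_fields_expr in
  let f2 := EFst (ESnd frame_fields_expr) in
  let f3 := EFst (ESnd (ESnd frame_fields_expr)) in
  let f4 := ESnd (ESnd (ESnd frame_fields_expr)) in
  let f34 := ESnd (ESnd frame_fields_expr) in
  EIfz stack_expr EIn
  (EIfz frame_tag_expr
     (EIfz f2
        (call_expr f1 (EComp rev_expr (cons_expr val_expr f4)) rest_expr)
        (call_expr (hd_of f2) f3
           (cons_expr (comp_frame_expr f1 (tl_of f2) f3 (cons_expr val_expr f4)) rest_expr)))
  (EIfz (ESub frame_tag_expr (EConst 1))
     (EIfz (EAdd (ESub f2 f3) (ESub f3 f2))
        (ret_expr val_expr rest_expr)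
        (call_expr f1 (cons_expr f2 (cons_expr val_expr f4))
           (cons_expr (prec_frame_expr f1 (succ_of f2) f3 f4) rest_expr)))
  (EIfz (ESub frame_tag_expr (EConst 2))
     (EIfz val_expr (ret_expr f2 rest_expr)
        (call_expr f1 (cons_expr (succ_of f2) f34)
           (cons_expr (mu_frame_expr f1 (succ_of f2) f34) rest_expr)))
  EIn))).

Definition step_expr := EIfz (EFst control_expr) call_step_expr ret_step_expr.
Definition step x := denote step_expr x.

Lemma chd_S y : chd (S y) = cfst y. Proof. reflexivity. Qed.
Lemma ctl_S y : ctl (S y) = csnd y. Proof. reflexivity. Qed.

#[local] Hint Rewrite denote_nth_expr denote_rev_expr chd_S ctl_S : denote.

Ltac compute_step :=
  unfold step, step_expr, call_step_expr, ret_step_expr, frame_tag_expr, frame_fields_expr,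
    frame_expr, rest_expr, tag_expr, fields_expr, prog_expr, args_expr, val_expr,
    control_expr, stack_expr, hd_of, tl_of, succ_of,
    call_expr, ret_expr, comp_frame_expr, prec_frame_expr, mu_frame_expr,
    call, ret, comp_frame, prec_frame, mu_frame, ccons;
  repeat (autorewrite with denote; simpl).

Section Steps.
Variables (f g i n v w : nat) (l gs vs K : nat).

Lemma step_call_zero : step (cpair (call (cpair 0 0) l) K) = cpair (ret 0) K.
Proof. compute_step. reflexivity. Qed.

Lemma step_call_succ ls :
  step (cpair (call (cpair 1 0) (clist ls)) K) = cpair (ret (S (hd 0 ls))) K.
Proof. compute_step. now rewrite chd_clist, Nat.add_1_r. Qed.

Lemma step_call_proj ls :
  step (cpair (call (cpair 2 i) (clist ls)) K) = cpair (ret (nth i ls 0)) K.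
Proof. compute_step. reflexivity. Qed.

Lemma step_call_comp_nil : step (cpair (call (cpair 3 (cpair f 0)) l) K) = cpair (call f 0) K.
Proof. compute_step. reflexivity. Qed.

Lemma step_call_comp_cons :
  step (cpair (call (cpair 3 (cpair f (ccons g gs))) l) K) =
  cpair (call g l) (ccons (comp_frame f gs l 0) K).
Proof. compute_step. reflexivity. Qed.

Lemma step_call_prec :
  step (cpair (call (cpair 4 (cpair f g)) (ccons n l)) K) =
  cpair (call f l) (ccons (prec_frame g 0 n l) K).
Proof. compute_step. reflexivity. Qed.

Lemma step_call_mu :
  step (cpair (call (cpair 5 f) l) K) = cpair (call f (ccons 0 l)) (ccons (mu_frame f 0 l) K).
Proof. compute_step. reflexivity. Qed.

Lemma step_ret_comp_nil a :
  step (cpair (ret v) (ccons (comp_frame f 0 l (clist a)) K)) =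
  cpair (call f (clist (rev (v :: a)))) K.
Proof.
  compute_step. change (S (cpair v (clist a))) with (clist (v :: a)).
  now rewrite denote_rev_expr.
Qed.

Lemma step_ret_comp_cons :
  step (cpair (ret v) (ccons (comp_frame f (ccons g gs) l vs) K)) =
  cpair (call g l) (ccons (comp_frame f gs l (ccons v vs)) K).
Proof. compute_step. reflexivity. Qed.

Lemma step_ret_prec_done : step (cpair (ret v) (ccons (prec_frame g n n l) K)) = cpair (ret v) K.
Proof. compute_step. now rewrite Nat.sub_diag. Qed.

Lemma step_ret_prec_next : i <> n ->
  step (cpair (ret v) (ccons (prec_frame g i n l) K)) =
  cpair (call g (ccons i (ccons v l))) (ccons (prec_frame g (S i) n l) K).
Proof.
  intros Hin. compute_step. destruct (i - n + (n - i)) eqn:E; [lia|]. now rewrite Nat.add_1_r.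
Qed.

Lemma step_ret_mu_found : step (cpair (ret 0) (ccons (mu_frame f i l) K)) = cpair (ret i) K.
Proof. compute_step. reflexivity. Qed.

Lemma step_ret_mu_next :
  step (cpair (ret (S w)) (ccons (mu_frame f i l) K)) =
  cpair (call f (ccons (S i) l)) (ccons (mu_frame f (S i) l) K).
Proof. compute_step. now rewrite Nat.add_1_r. Qed.

Lemma step_halted : step (cpair (ret v) 0) = cpair (ret v) 0.
Proof. compute_step. reflexivity. Qed.

End Steps.

Definition reaches x y := exists s, Nat.iter s step x = y.

Lemma reaches_refl x : reaches x x.
Proof. now exists 0. Qed.

Lemma reaches_trans x y z : reaches x y -> reaches y z -> reaches x z.
Proof. intros [a Ha] [b Hb]. exists (b + a). rewrite Nat.iter_add. congruence. Qed.

Lemma reaches_step x y : reaches (step x) y -> reaches x y.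
Proof. intros [a Ha]. exists (S a). now rewrite Nat.iter_succ_r. Qed.

Definition returns p l v :=
  forall K, reaches (cpair (call (recf_code p) (clist l)) K) (cpair (ret v) K).

(* The loop of a run of [RPrec f g] on [N :: l] reaches stage [n <= N] holding the value
   at [n :: l]; this is the induction hypothesis that [ev_precS] needs. *)
Definition prec_stage f g n l v :=
  forall N K, n <= N ->
  reaches (cpair (call (recf_code f) (clist l)) (ccons (prec_frame (recf_code g) 0 N (clist l)) K))
          (cpair (ret v) (ccons (prec_frame (recf_code g) n N (clist l)) K)).

Definition prec_invariant p l v :=
  match p, l with RPrec f g, n :: l' => prec_stage f g n l' v | _, _ => True end.

Definition args_return gs l vs :=
  match gs with
  | [] => vs = []
  | g :: gs' => forall f a K,
      reaches (cpair (call (recf_code g) (clist l))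
                 (ccons (comp_frame f (clist (map recf_code gs')) (clist l) (clist a)) K))
              (cpair (call f (clist (rev a ++ vs))) K)
  end.

Lemma returns_comp f gs l vs v :
  args_return gs l vs -> returns f vs v -> returns (RComp f gs) l v.
Proof.
  intros Hgs Hf K. apply reaches_step. destruct gs as [|g gs]; simpl in Hgs |- *.
  - subst. rewrite step_call_comp_nil. apply Hf.
  - rewrite step_call_comp_cons. eapply reaches_trans; [apply (Hgs _ [])|apply Hf].
Qed.

Lemma args_return_cons g gs l v vs :
  returns g l v -> args_return gs l vs -> args_return (g :: gs) l (v :: vs).
Proof.
  intros Hg Hgs f a K. eapply reaches_trans; [apply Hg|]. apply reaches_step.
  destruct gs as [|g' gs]; simpl in Hgs |- *.
  - subst. rewrite step_ret_comp_nil. apply reaches_refl.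
  - rewrite step_ret_comp_cons. eapply reaches_trans; [apply (Hgs f (v :: a))|].
    simpl. rewrite <- app_assoc. apply reaches_refl.
Qed.

Lemma returns_prec f g n l v : prec_stage f g n l v -> returns (RPrec f g) (n :: l) v.
Proof.
  intros Hn K. apply reaches_step. simpl. rewrite step_call_prec.
  eapply reaches_trans; [apply Hn; lia|]. apply reaches_step.
  rewrite step_ret_prec_done. apply reaches_refl.
Qed.

Lemma prec_stage_0 f g l v : returns f l v -> prec_stage f g 0 l v.
Proof. intros Hf N K _. apply Hf. Qed.

Lemma prec_stage_S f g n l z v :
  prec_stage f g n l z -> returns g (n :: z :: l) v -> prec_stage f g (S n) l v.
Proof.
  intros Hn Hg N K HN. eapply reaches_trans; [apply Hn; lia|]. apply reaches_step.
  rewrite step_ret_prec_next by lia. apply Hg.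
Qed.

Lemma returns_mu f l n :
  returns f (n :: l) 0 -> (forall m, m < n -> exists k, returns f (m :: l) (S k)) ->
  returns (RMu f) l n.
Proof.
  intros Hn Hlt K. apply reaches_step. simpl. rewrite step_call_mu.
  set (cf := recf_code f).
  assert (Hloop : forall m, m <= n ->
    reaches (cpair (call cf (clist (0 :: l))) (ccons (mu_frame cf 0 (clist l)) K))
            (cpair (call cf (clist (m :: l))) (ccons (mu_frame cf m (clist l)) K))).
  { induction m as [|m IHm]; intros Hm; [apply reaches_refl|].
    eapply reaches_trans; [apply IHm; lia|].
    destruct (Hlt m ltac:(lia)) as [k Hk].
    eapply reaches_trans; [apply Hk|]. apply reaches_step.
    rewrite step_ret_mu_next. apply reaches_refl. }
  eapply reaches_trans; [apply (Hloop n (le_n n))|].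
  eapply reaches_trans; [apply Hn|]. apply reaches_step.
  rewrite step_ret_mu_found. apply reaches_refl.
Qed.

Lemma returns_of_step p l v :
  (forall K, step (cpair (call (recf_code p) (clist l)) K) = cpair (ret v) K) -> returns p l v.
Proof. intros H K. apply reaches_step. rewrite H. apply reaches_refl. Qed.

Lemma eval_returns p l v : eval p l v -> returns p l v.
Proof.
  intros H. apply (eval_mut_ind (fun p l v => returns p l v /\ prec_invariant p l v) args_return).
  - split; [|exact I]. apply returns_of_step. intros K. apply step_call_zero.
  - split; [|exact I]. apply returns_of_step. intros K. apply step_call_succ.
  - split; [|exact I]. apply returns_of_step. intros K. apply step_call_proj.
  - intros f gs l' vs v' _ Hgs _ [Hf _]. split; [|exact I]. eapply returns_comp; eauto.
  - intros f g l' v' _ [Hf _]. assert (H0 : prec_stage f g 0 l' v') by now apply prec_stage_0.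
    split; [apply returns_prec|]; exact H0.
  - intros f g n l' z v' _ [_ Hn] _ [Hg _].
    assert (HS : prec_stage f g (S n) l' v') by (eapply prec_stage_S; eauto).
    split; [apply returns_prec|]; exact HS.
  - intros f l' n _ [H0 _] Hlt. split; [|exact I]. apply returns_mu; auto.
    intros m Hm. destruct (Hlt m Hm) as [k [_ [Hk _]]]. eauto.
  - intros l'. reflexivity.
  - intros g gs l' v' vs _ [Hg _] _ Hgs. now apply args_return_cons.
  - exact H.
Qed.

(** * Step-bounded runs and computability *)

Definition start e i := cpair (call e (clist [i])) 0.
Definition halts_with e i a := exists s, Nat.iter s step (start e i) = cpair (ret a) 0.

Lemma halted_stays s a : Nat.iter s step (cpair (ret a) 0) = cpair (ret a) 0.
Proof. apply iter_fixpoint, step_halted. Qed.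

Lemma halted_later e i a s t :
  Nat.iter s step (start e i) = cpair (ret a) 0 -> s <= t ->
  Nat.iter t step (start e i) = cpair (ret a) 0.
Proof.
  intros Hs Hst. replace t with ((t - s) + s) by lia.
  rewrite Nat.iter_add, Hs. apply halted_stays.
Qed.

Lemma ret_halted_inj a b : cpair (ret a) 0 = cpair (ret b) 0 -> a = b.
Proof.
  intros H. apply (f_equal (fun x => csnd (cfst x))) in H. unfold ret in H.
  now rewrite !cfst_pair, !csnd_pair in H.
Qed.

Lemma halts_with_functional e i a b : halts_with e i a -> halts_with e i b -> a = b.
Proof.
  intros [s Hs] [t Ht]. apply ret_halted_inj.
  rewrite <- (halted_later _ _ _ s (s + t) Hs), <- (halted_later _ _ _ t (s + t) Ht); lia.
Qed.

Lemma eval_halts_with q i v : eval q [i] v -> halts_with (recf_code q) i v.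
Proof. intros H. apply (eval_returns q [i] v H 0). Qed.

Definition halt_gap X := (cfst (cfst X) - 1) + (1 - cfst (cfst X)) + csnd X.
Definition output X := csnd (cfst X).

Lemma halt_gap_spec X : halt_gap X = 0 -> X = cpair (ret (output X)) 0.
Proof.
  unfold halt_gap, output, ret. intros H.
  rewrite <- (cpair_surj X) at 1. f_equal; [|lia].
  rewrite <- (cpair_surj (cfst X)) at 1. f_equal. lia.
Qed.

Lemma halt_gap_ret a : halt_gap (cpair (ret a) 0) = 0 /\ output (cpair (ret a) 0) = a.
Proof. unfold halt_gap, output, ret. now rewrite !cfst_pair, !csnd_pair. Qed.

Definition halt_gap_expr X :=
  EAdd (EAdd (ESub (EFst (EFst X)) (EConst 1)) (ESub (EConst 1) (EFst (EFst X)))) (ESnd X).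
Definition output_expr X := ESnd (EFst X).

Lemma denote_halt_gap_expr X x : denote (halt_gap_expr X) x = halt_gap (denote X x).
Proof. reflexivity. Qed.

Lemma denote_output_expr X x : denote (output_expr X) x = output (denote X x).
Proof. reflexivity. Qed.

Definition run_expr := EPrec (EFst EIn) (ESnd EIn) (EComp step_expr (EFst (ESnd EIn))).

Lemma denote_run_expr s x : denote run_expr (cpair s x) = Nat.iter s step x.
Proof.
  unfold run_expr. rewrite (denote_EPrec_iter _ _ _ _ step).
  - now autorewrite with denote.
  - intros. now autorewrite with denote.
Qed.

Definition start_expr e i := EPair (EPair (EConst 0) (EPair e (cons_expr i (EConst 0)))) (EConst 0).

Lemma denote_start_expr e i x : denote (start_expr e i) x = start (denote e x) (denote i x).
Proof. unfold start_expr. now autorewrite with denote. Qed.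

#[local] Hint Rewrite denote_halt_gap_expr denote_output_expr denote_run_expr
  denote_start_expr : denote.

Lemma least_witness (P : nat -> Prop) :
  (forall n, P n \/ ~ P n) -> (exists n, P n) -> exists n, P n /\ forall m, m < n -> ~ P m.
Proof.
  intros Hdec Hex.
  destruct (dec_inh_nat_subset_has_unique_least_element P Hdec Hex) as [n [[Hn Hmin] _]].
  exists n. split; auto. intros m Hm Pm. specialize (Hmin m Pm). lia.
Qed.

Lemma computable_least_root (T : expr) :
  (forall k, exists s, denote T (cpair s k) = 0) ->
  exists f, computable f /\ forall k, denote T (cpair (f k) k) = 0.
Proof.
  intros Hex.
  set (search := RMu (comp1 (compile T) (comp2 cpair_rf (RProj 0) (RProj 1)))).
  assert (HT : forall s k, eval (comp1 (compile T) (comp2 cpair_rf (RProj 0) (RProj 1))) [s; k]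
                             (denote T (cpair s k))).
  { intros s k. eapply eval_comp1; [|apply eval_compile1].
    eapply eval_comp2; [apply eval_proj; reflexivity|apply eval_proj; reflexivity|].
    apply eval_cpair_rf. }
  assert (Hsearch : forall k, exists s, eval search [k] s /\ denote T (cpair s k) = 0).
  { intros k. destruct (least_witness (fun s => denote T (cpair s k) = 0)) as [s [Hs Hmin]];
      [intros s; lia|apply Hex|].
    exists s. split; auto. apply ev_mu; [eapply eval_val_eq; [apply HT|exact Hs]|].
    intros m Hm. specialize (Hmin m Hm).
    destruct (denote T (cpair m k)) as [|w] eqn:E; [contradiction|].
    exists w. eapply eval_val_eq; [apply HT|exact E]. }
  destruct (choice _ Hsearch) as [f Hf].
  exists f. split; [exists search|]; intros k; apply Hf.
Qed.

Lemma halts_with_computable e (inp : expr) :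
  (forall k, exists a, halts_with e (denote inp k) a) ->
  exists f, computable f /\ forall k, halts_with e (denote inp k) (f k).
Proof.
  intros Hex.
  set (run := EComp run_expr (EPair (EFst EIn) (start_expr (EConst e) (EComp inp (ESnd EIn))))).
  assert (Hrun : forall s k, denote run (cpair s k) = Nat.iter s step (start e (denote inp k))).
  { intros. unfold run. now autorewrite with denote. }
  destruct (computable_least_root (halt_gap_expr run)) as [time [Htime Hhalt]].
  { intros k. destruct (Hex k) as [a [s Hs]]. exists s.
    rewrite denote_halt_gap_expr, Hrun, Hs. apply halt_gap_ret. }
  exists (fun k => denote (output_expr run) (cpair (time k) k)). split.
  - now apply computable_denote_pair.
  - intros k. exists (time k). specialize (Hhalt k).
    rewrite denote_halt_gap_expr, Hrun in Hhalt. apply halt_gap_spec in Hhalt.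
    now rewrite denote_output_expr, Hrun.
Qed.

(** * Reading prefixes bit by bit *)

Definition halve_step r := cpair (cfst r + csnd r) (1 - csnd r).
Definition halve_parity k := Nat.iter k halve_step (cpair 0 0).
Definition half a := cfst (halve_parity a).
Definition parity a := csnd (halve_parity a).

Lemma halve_parity_spec k : 2 * half k + parity k = k /\ parity k <= 1.
Proof.
  unfold half, parity, halve_parity. induction k as [|k IHk].
  - change (Nat.iter 0 halve_step (cpair 0 0)) with (cpair 0 0).
    rewrite cfst_pair, csnd_pair. lia.
  - rewrite Nat.iter_succ. set (r := Nat.iter k halve_step (cpair 0 0)) in *.
    unfold halve_step. rewrite cfst_pair, csnd_pair. lia.
Qed.

Lemma half_parity_double q b : b <= 1 -> half (2 * q + b) = q /\ parity (2 * q + b) = b.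
Proof. intros Hb. destruct (halve_parity_spec (2 * q + b)). lia. Qed.

Definition bit i a := parity (Nat.iter i half a).

Lemma bit_prefix_code m x i : i < m -> bit i (prefix_code x m) = Nat.b2n (x i).
Proof.
  revert x i; induction m as [|m IHm]; intros x i Hi; [lia|].
  change (prefix_code x (S m))
    with (2 * prefix_code (fun i => x (S i)) m + (if x 0 then 1 else 0)).
  destruct (half_parity_double (prefix_code (fun i => x (S i)) m) (if x 0 then 1 else 0))
    as [Hhalf Hpar]; [destruct (x 0); auto|].
  unfold bit. destruct i as [|i].
  - change (parity (2 * prefix_code (fun i => x (S i)) m + (if x 0 then 1 else 0)) = Nat.b2n (x 0)).
    rewrite Hpar. now destruct (x 0).
  - rewrite Nat.iter_succ_r, Hhalf. apply (IHm (fun i => x (S i))). lia.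
Qed.

Definition halve_parity_expr :=
  EPrec EIn (EPair (EConst 0) (EConst 0))
    (EComp (EPair (EAdd (EFst EIn) (ESnd EIn)) (ESub (EConst 1) (ESnd EIn))) (EFst (ESnd EIn))).

Lemma denote_halve_parity_expr a : denote halve_parity_expr a = halve_parity a.
Proof.
  unfold halve_parity_expr. rewrite (denote_EPrec_iter _ _ _ _ halve_step); [reflexivity|].
  intros. now autorewrite with denote.
Qed.

Definition bit_expr :=
  EComp (ESnd halve_parity_expr)
    (EPrec (EFst EIn) (ESnd EIn) (EComp (EFst halve_parity_expr) (EFst (ESnd EIn)))).

Lemma denote_bit_expr i a : denote bit_expr (cpair i a) = bit i a.
Proof.
  unfold bit_expr. rewrite denote_EComp, denote_ESnd, denote_halve_parity_expr.
  rewrite (denote_EPrec_iter _ _ _ _ half).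
  - now autorewrite with denote.
  - intros. autorewrite with denote. now rewrite denote_halve_parity_expr.
Qed.

Definition leading_ones (u : cantor) c := u c = false /\ forall i, i < c -> u i = true.

Lemma leading_ones_unique u c c' : leading_ones u c -> leading_ones u c' -> c = c'.
Proof.
  intros [H1 H2] [H3 H4]. destruct (lt_eq_lt_dec c c') as [[Hlt|]|Hlt]; auto.
  - rewrite H4 in H1 by auto; discriminate.
  - rewrite H2 in H3 by auto; discriminate.
Qed.

Lemma leading_ones_exists (u : cantor) : (exists i, u i = false) -> exists c, leading_ones u c.
Proof.
  intros Hex. destruct (least_witness (fun i => u i = false)) as [c [Hc Hmin]]; auto.
  - intros n. destruct (u n); [right; discriminate|left; reflexivity].
  - exists c. split; auto. intros i Hi. specialize (Hmin i Hi). now destruct (u i).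
Qed.

Fixpoint count_ones a j :=
  match j with
  | 0 => 0
  | S j' => if (count_ones a j' =? j') && (bit j' a =? 1) then S j' else count_ones a j'
  end.

Lemma count_ones_spec a j :
  count_ones a j <= j /\ (forall i, i < count_ones a j -> bit i a = 1) /\
  (count_ones a j < j -> bit (count_ones a j) a <> 1).
Proof.
  induction j as [|j [IH1 [IH2 IH3]]]; simpl; [repeat split; intros; lia|].
  destruct (Nat.eqb_spec (count_ones a j) j), (Nat.eqb_spec (bit j a) 1); simpl;
    repeat split; try lia; auto.
  - intros i Hi. destruct (Nat.eq_dec i j); subst; auto. apply IH2; lia.
  - intros _. congruence.
Qed.

Lemma count_ones_prefix_code u m c :
  c < m -> (count_ones (prefix_code u m) m = c <-> leading_ones u c).
Proof.
  intros Hcm. destruct (count_ones_spec (prefix_code u m) m) as [Hle [Hones Hzero]].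
  assert (Hbit : forall i, i < m -> bit i (prefix_code u m) = Nat.b2n (u i))
    by (intros; now apply bit_prefix_code).
  assert (Hlead : count_ones (prefix_code u m) m < m ->
                  leading_ones u (count_ones (prefix_code u m) m)).
  { intros Hlt. split.
    - specialize (Hzero Hlt). rewrite Hbit in Hzero by lia. now destruct (u _).
    - intros i Hi. specialize (Hones i Hi). rewrite Hbit in Hones by lia. now destruct (u i). }
  split; [intros <-; auto|intros Hc].
  destruct (Nat.lt_ge_cases (count_ones (prefix_code u m) m) m) as [Hlt|Hge].
  - apply (leading_ones_unique u); auto.
  - exfalso. destruct Hc as [Hc _]. specialize (Hones c ltac:(lia)).
    rewrite Hbit, Hc in Hones by lia. discriminate.
Qed.

Definition count_ones_expr :=
  let i := EFst EIn in
  let r := EFst (ESnd EIn) in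
  let b := EComp bit_expr (EPair i (EFst (ESnd (ESnd EIn)))) in
  EPrec (ESnd EIn) (EConst 0)
    (EIfz (EAdd (EAdd (ESub r i) (ESub i r)) (EAdd (ESub b (EConst 1)) (ESub (EConst 1) b)))
       (EAdd i (EConst 1)) r).

Lemma denote_count_ones_expr a m : denote count_ones_expr (cpair a m) = count_ones a m.
Proof.
  unfold count_ones_expr. cbv zeta. rewrite (denote_EPrec _ _ _ _ (count_ones a)).
  - now autorewrite with denote.
  - reflexivity.
  - intros i. autorewrite with denote. rewrite denote_bit_expr. simpl count_ones.
    match goal with |- _ = match ?X with 0 => _ | S _ => _ end => destruct X eqn:E end;
      destruct (Nat.eqb_spec (count_ones a i) i), (Nat.eqb_spec (bit i a) 1); simpl; lia.
Qed.

(** * The graph and its Pi^0_2 matrix *)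

Definition hub_forth c := cfst c.
Definition hub_back c := cfst (csnd c).
Definition hub_pos c := cfst (csnd (csnd c)).

(* The hub programs receive the hub code itself, which contains them, so no fixed point
   is needed; the bit of the other point lets one hub serve two different neighbours. *)
Definition hub_input (o : cantor) c k := cpair c (cpair (Nat.b2n (o (hub_pos c))) k).

Definition hub_links_at (h o : cantor) c k :=
  (exists a, halts_with (hub_forth c) (hub_input o c k) a /\ o k = h a) /\
  (exists a, halts_with (hub_back c) (hub_input o c k) a /\ h k = o a).

Definition hub_links h o c := forall k, hub_links_at h o c k.

Definition meq_graph (u v : cantor) :=
  exists cu cv, leading_ones u cu /\ leading_ones v cv /\
    ((cv < cu /\ hub_links u v cu) \/ (cu < cv /\ hub_links v u cv)).

(* Each test below is a number that vanishes exactly when the test passes; the tests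
   [lt_gap _ m] keep every bit consulted inside the prefixes of length [m]. *)
Definition lt_gap a b := S a - b.
Definition eq_gap a b := (a - b) + (b - a).

Definition hub_check n m H O c :=
  let inp := cpair c (cpair (bit (hub_pos c) O) n) in
  let X1 := Nat.iter m step (start (hub_forth c) inp) in
  let X2 := Nat.iter m step (start (hub_back c) inp) in
  lt_gap (hub_pos c) m + lt_gap n m
  + halt_gap X1 + lt_gap (output X1) m + eq_gap (bit n O) (bit (output X1) H)
  + halt_gap X2 + lt_gap (output X2) m + eq_gap (bit n H) (bit (output X2) O).

Definition edge_check n m A B :=
  let ca := count_ones A m in
  let cb := count_ones B m in
  lt_gap ca m + lt_gap cb m +
  match lt_gap cb ca with
  | 0 => hub_check n m A B ca
  | S _ => match lt_gap ca cb with 0 => hub_check n m B A cb | S _ => 1 end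
  end.

Lemma lt_gap_match {A} a b (x y : A) :
  match lt_gap a b with 0 => x | S _ => y end = if a <? b then x else y.
Proof. unfold lt_gap. destruct (Nat.ltb_spec a b), (S a - b) eqn:E; auto; lia. Qed.

Lemma hub_check_sound n m (h o : cantor) c :
  hub_check n m (prefix_code h m) (prefix_code o m) c = 0 -> hub_links_at h o c n.
Proof.
  unfold hub_check, lt_gap, eq_gap. cbv zeta. intros Hc.
  rewrite (bit_prefix_code m o) in Hc by lia. fold (hub_input o c n) in Hc.
  set (X1 := Nat.iter m step (start (hub_forth c) (hub_input o c n))) in *.
  set (X2 := Nat.iter m step (start (hub_back c) (hub_input o c n))) in *.
  assert (H1 : X1 = cpair (ret (output X1)) 0) by (apply halt_gap_spec; lia).
  assert (H2 : X2 = cpair (ret (output X2)) 0) by (apply halt_gap_spec; lia).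
  assert (E1 : bit n (prefix_code o m) = bit (output X1) (prefix_code h m)) by lia.
  assert (E2 : bit n (prefix_code h m) = bit (output X2) (prefix_code o m)) by lia.
  rewrite !bit_prefix_code in E1, E2 by lia.
  split; [exists (output X1)|exists (output X2)];
    split; try (exists m; assumption); now apply Nat.b2n_inj.
Qed.

Lemma hub_check_complete n (h o : cantor) c :
  hub_links_at h o c n ->
  exists m0, forall m, m0 <= m -> hub_check n m (prefix_code h m) (prefix_code o m) c = 0.
Proof.
  intros [[a1 [[s1 Hs1] E1]] [a2 [[s2 Hs2] E2]]].
  exists (S (hub_pos c + n + a1 + a2 + s1 + s2)). intros m Hm.
  unfold hub_check. cbv zeta. rewrite (bit_prefix_code m o) by lia. fold (hub_input o c n).
  rewrite (halted_later _ _ _ s1 m Hs1), (halted_later _ _ _ s2 m Hs2) by lia.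
  destruct (halt_gap_ret a1) as [-> ->], (halt_gap_ret a2) as [-> ->].
  unfold lt_gap, eq_gap. rewrite !bit_prefix_code by lia. rewrite E1, E2. lia.
Qed.

Lemma edge_check_leading n m u v :
  edge_check n m (prefix_code u m) (prefix_code v m) = 0 ->
  exists cu cv, leading_ones u cu /\ leading_ones v cv /\ cu < m /\ cv < m.
Proof.
  unfold edge_check, lt_gap. cbv zeta. intros Hc.
  exists (count_ones (prefix_code u m) m), (count_ones (prefix_code v m) m).
  rewrite <- !(count_ones_prefix_code _ m) by lia. repeat split; lia.
Qed.

Lemma edge_check_zero_iff n m u v cu cv :
  leading_ones u cu -> leading_ones v cv -> cu < m -> cv < m ->
  (edge_check n m (prefix_code u m) (prefix_code v m) = 0 <->
   (cv < cu /\ hub_check n m (prefix_code u m) (prefix_code v m) cu = 0) \/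
   (cu < cv /\ hub_check n m (prefix_code v m) (prefix_code u m) cv = 0)).
Proof.
  intros Hu Hv Hum Hvm. unfold edge_check. cbv zeta.
  rewrite (proj2 (count_ones_prefix_code u m cu Hum) Hu),
          (proj2 (count_ones_prefix_code v m cv Hvm) Hv), !lt_gap_match.
  unfold lt_gap at 1 2. replace (S cu - m) with 0 by lia. replace (S cv - m) with 0 by lia.
  destruct (Nat.ltb_spec cv cu), (Nat.ltb_spec cu cv); simpl; intuition lia.
Qed.

Lemma meq_graph_iff_check u v :
  meq_graph u v <-> forall n, exists m, edge_check n m (prefix_code u m) (prefix_code v m) = 0.
Proof.
  split.
  - intros (cu & cv & Hu & Hv & Hcase) n.
    destruct Hcase as [[Hlt Hl]|[Hlt Hl]];
      [destruct (hub_check_complete n u v cu (Hl n)) as [m0 Hm0]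
      |destruct (hub_check_complete n v u cv (Hl n)) as [m0 Hm0]];
      exists (m0 + cu + cv + 1); apply (edge_check_zero_iff n _ u v cu cv); auto; try lia;
      [left|right]; split; auto; apply Hm0; lia.
  - intros Hcheck. destruct (Hcheck 0) as [m0 Hm0].
    destruct (edge_check_leading _ _ _ _ Hm0) as (cu & cv & Hu & Hv & Hum & Hvm).
    exists cu, cv. split; auto. split; auto.
    assert (Hat : forall k,
      (cv < cu /\ hub_links_at u v cu k) \/ (cu < cv /\ hub_links_at v u cv k)).
    { intros k. destruct (Hcheck k) as [m Hm].
      destruct (edge_check_leading _ _ _ _ Hm) as (cu' & cv' & Hu' & Hv' & Hum' & Hvm').
      rewrite <- (leading_ones_unique u cu cu'), <- (leading_ones_unique v cv cv') in * by auto.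
      apply (edge_check_zero_iff k m u v cu cv) in Hm; auto.
      destruct Hm as [[? Hm]|[? Hm]]; [left|right]; split; auto; eapply hub_check_sound; eauto. }
    destruct (Hat 0) as [[Hlt _]|[Hlt _]]; [left|right]; split; auto;
      intros k; destruct (Hat k) as [[? ?]|[? ?]]; auto; lia.
Qed.

Definition lt_gap_expr a b := ESub (EAdd (EConst 1) a) b.
Definition eq_gap_expr a b := EAdd (ESub a b) (ESub b a).
Definition bit_of i a := EComp bit_expr (EPair i a).
Definition run_of s x := EComp run_expr (EPair s x).
Definition count_ones_of a m := EComp count_ones_expr (EPair a m).

Lemma denote_lt_gap_expr a b x : denote (lt_gap_expr a b) x = lt_gap (denote a x) (denote b x).
Proof. reflexivity. Qed.

Lemma denote_eq_gap_expr a b x : denote (eq_gap_expr a b) x = eq_gap (denote a x) (denote b x).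
Proof. reflexivity. Qed.

Lemma denote_bit_of i a x : denote (bit_of i a) x = bit (denote i x) (denote a x).
Proof. unfold bit_of. rewrite denote_EComp, denote_EPair. apply denote_bit_expr. Qed.

Lemma denote_run_of s X x : denote (run_of s X) x = Nat.iter (denote s x) step (denote X x).
Proof. unfold run_of. rewrite denote_EComp, denote_EPair. apply denote_run_expr. Qed.

Lemma denote_count_ones_of a m x :
  denote (count_ones_of a m) x = count_ones (denote a x) (denote m x).
Proof. unfold count_ones_of. rewrite denote_EComp, denote_EPair. apply denote_count_ones_expr. Qed.

#[local] Hint Rewrite denote_lt_gap_expr denote_eq_gap_expr denote_bit_of denote_run_of
  denote_count_ones_of : denote.

Definition hub_check_expr n m H O c :=
  let inp := EPair c (EPair (bit_of (EFst (ESnd (ESnd c))) O) n) in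
  let X1 := run_of m (start_expr (EFst c) inp) in
  let X2 := run_of m (start_expr (EFst (ESnd c)) inp) in
  EAdd (EAdd (EAdd (EAdd (EAdd (EAdd (EAdd
    (lt_gap_expr (EFst (ESnd (ESnd c))) m) (lt_gap_expr n m))
    (halt_gap_expr X1)) (lt_gap_expr (output_expr X1) m))
    (eq_gap_expr (bit_of n O) (bit_of (output_expr X1) H)))
    (halt_gap_expr X2)) (lt_gap_expr (output_expr X2) m))
    (eq_gap_expr (bit_of n H) (bit_of (output_expr X2) O)).

Lemma denote_hub_check_expr n m H O c x :
  denote (hub_check_expr n m H O c) x =
  hub_check (denote n x) (denote m x) (denote H x) (denote O x) (denote c x).
Proof. unfold hub_check_expr. now autorewrite with denote. Qed.

#[local] Hint Rewrite denote_hub_check_expr : denote.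

Definition edge_check_expr :=
  let n := EFst EIn in
  let m := EFst (ESnd EIn) in
  let A := EFst (ESnd (ESnd EIn)) in
  let B := ESnd (ESnd (ESnd EIn)) in
  let ca := count_ones_of A m in
  let cb := count_ones_of B m in
  EAdd (EAdd (lt_gap_expr ca m) (lt_gap_expr cb m))
    (EIfz (lt_gap_expr cb ca) (hub_check_expr n m A B ca)
       (EIfz (lt_gap_expr ca cb) (hub_check_expr n m B A cb) (EConst 1))).

Lemma denote_edge_check_expr n m A B :
  denote edge_check_expr (cpair n (cpair m (cpair A B))) = edge_check n m A B.
Proof. unfold edge_check_expr. now autorewrite with denote. Qed.

Definition edge_check_rf :=
  comp1 (compile edge_check_expr)
    (comp2 cpair_rf (RProj 0) (comp2 cpair_rf (RProj 1) (comp2 cpair_rf (RProj 2) (RProj 3)))).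

Lemma eval_edge_check_rf n m a b : eval edge_check_rf [n; m; a; b] (edge_check n m a b).
Proof.
  rewrite <- denote_edge_check_expr. eapply eval_comp1; [|apply eval_compile1].
  eapply eval_comp2; [apply eval_proj; reflexivity| |apply eval_cpair_rf].
  eapply eval_comp2; [apply eval_proj; reflexivity| |apply eval_cpair_rf].
  eapply eval_comp2; [apply eval_proj; reflexivity|apply eval_proj; reflexivity|].
  apply eval_cpair_rf.
Qed.

Lemma meq_graph_pi02 : pi02_2 meq_graph.
Proof.
  exists edge_check_rf. split.
  - intros. eexists. apply eval_edge_check_rf.
  - intros u v. rewrite meq_graph_iff_check.
    split; intros H n; destruct (H n) as [m Hm]; exists m.
    + rewrite <- Hm. apply eval_edge_check_rf.
    + eapply eval_functional; [apply eval_edge_check_rf|exact Hm].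
Qed.

(** * Edges join exactly the m-equivalent points *)

Lemma mred_refl x : mred x x.
Proof. exists (fun n => n). split; auto. exists (RProj 0). intros n. apply ev_proj. Qed.

Lemma mred_trans x y z : mred x y -> mred y z -> mred x z.
Proof.
  intros [f [Hf Hxy]] [g [Hg Hyz]]. exists (fun n => g (f n)).
  split; [now apply computable_comp|]. intros n. now rewrite Hxy, Hyz.
Qed.

Lemma meq_refl x : meq x x.
Proof. split; apply mred_refl. Qed.

Lemma meq_trans x y z : meq x y -> meq y z -> meq x z.
Proof. intros [? ?] [? ?]; split; eapply mred_trans; eauto. Qed.

Lemma hub_links_mred h o c : hub_links h o c -> mred o h /\ mred h o.
Proof.
  intros Hl. set (inp := EPair (EConst c) (EPair (EConst (Nat.b2n (o (hub_pos c)))) EIn)).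
  split.
  - destruct (halts_with_computable (hub_forth c) inp) as [f [Hf Hfh]].
    { intros k. destruct (Hl k) as [[a [Ha _]] _]. now exists a. }
    exists f. split; auto. intros k. destruct (Hl k) as [[a [Ha ->]] _].
    f_equal. exact (halts_with_functional _ _ _ _ Ha (Hfh k)).
  - destruct (halts_with_computable (hub_back c) inp) as [f [Hf Hfh]].
    { intros k. destruct (Hl k) as [_ [a [Ha _]]]. now exists a. }
    exists f. split; auto. intros k. destruct (Hl k) as [_ [a [Ha ->]]].
    f_equal. exact (halts_with_functional _ _ _ _ Ha (Hfh k)).
Qed.

Lemma meq_graph_meq u v : meq_graph u v -> meq u v.
Proof.
  intros (cu & cv & _ & _ & [[_ Hl]|[_ Hl]]); apply hub_links_mred in Hl; split; tauto.
Qed.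

Lemma meq_graph_simple : simple_graph meq_graph.
Proof.
  split.
  - intros u v (cu & cv & Hu & Hv & Hcase). exists cv, cu. tauto.
  - intros u (cu & cv & Hu & Hv & Hcase).
    rewrite (leading_ones_unique u cu cv Hu Hv) in Hcase. lia.
Qed.

Lemma walk_in_preorder {X} (G E : X -> X -> Prop) :
  (forall x, E x x) -> (forall x y z, E x y -> E y z -> E x z) ->
  (forall x y, G x y -> E x y) -> forall k x y, walk G k x y -> E x y.
Proof.
  intros Hrefl Htrans HGE k. induction k as [|k IHk]; simpl; intros x y H.
  - subst. apply Hrefl.
  - destruct H as [z [Hxz Hzy]]. eauto.
Qed.

Definition prepend_ones c (x : cantor) : cantor :=
  fun i => if i <? c then true else if i =? c then false else x (i - c - 1).

Definition unshift p0 p1 c k := if k <? c then p1 else if k =? c then p0 else k - c - 1.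

Lemma leading_ones_prepend c x : leading_ones (prepend_ones c x) c.
Proof.
  unfold prepend_ones. split.
  - now rewrite Nat.ltb_irrefl, Nat.eqb_refl.
  - intros i Hi. now apply Nat.ltb_lt in Hi as ->.
Qed.

Lemma prepend_ones_shift c x k : prepend_ones c x (k + c + 1) = x k.
Proof.
  unfold prepend_ones. destruct (Nat.ltb_spec (k + c + 1) c); [lia|].
  destruct (Nat.eqb_spec (k + c + 1) c); [lia|]. f_equal. lia.
Qed.

Lemma prepend_ones_unshift c (x : cantor) p0 p1 k :
  x p0 = false -> x p1 = true -> prepend_ones c x k = x (unshift p0 p1 c k).
Proof.
  intros H0 H1. unfold prepend_ones, unshift.
  destruct (k <? c); [auto|]. destruct (k =? c); auto.
Qed.

(* On [cpair c (cpair b k)], with [b = bx] meaning that the other point is [x] rather than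
   [y]: [hub_forth_fun] finds bit [k] of the other point in the hub [prepend_ones c x], and
   [hub_back_fun] finds bit [k] of the hub in the other point. *)
Definition hub_forth_fun bx g inp :=
  if cfst (csnd inp) =? bx then csnd (csnd inp) + cfst inp + 1
  else g (csnd (csnd inp)) + cfst inp + 1.

Definition hub_back_fun bx p0 p1 f inp :=
  if cfst (csnd inp) =? bx then unshift p0 p1 (cfst inp) (csnd (csnd inp))
  else f (unshift p0 p1 (cfst inp) (csnd (csnd inp))).

Lemma computable_hub_forth_fun bx g : computable g -> computable (hub_forth_fun bx g).
Proof.
  intros Hg.
  set (e := EIfz (eq_gap_expr (EFst (ESnd (ESnd EIn))) (EConst bx))
              (EAdd (EAdd (ESnd (ESnd (ESnd EIn))) (EFst (ESnd EIn))) (EConst 1))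
              (EAdd (EAdd (EFst EIn) (EFst (ESnd EIn))) (EConst 1))).
  apply (computable_ext (fun inp => denote e (cpair (g (csnd (csnd inp))) inp))).
  - intros inp. unfold e, hub_forth_fun, eq_gap. autorewrite with denote. apply ifz_eqb.
  - apply computable_denote_pair.
    apply (computable_comp _ _ (computable_denote (ESnd (ESnd EIn))) Hg).
Qed.

Definition unshift_expr p0 p1 c k :=
  EIfz (lt_gap_expr k c) (EConst p1)
    (EIfz (eq_gap_expr k c) (EConst p0) (ESub (ESub k c) (EConst 1))).

Lemma denote_unshift_expr p0 p1 c k x :
  denote (unshift_expr p0 p1 c k) x = unshift p0 p1 (denote c x) (denote k x).
Proof.
  unfold unshift_expr, unshift. autorewrite with denote. unfold eq_gap.
  rewrite lt_gap_match, ifz_eqb. f_equal. lia.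
Qed.

Lemma computable_hub_back_fun bx p0 p1 f : computable f -> computable (hub_back_fun bx p0 p1 f).
Proof.
  intros Hf. set (u := unshift_expr p0 p1 (EFst EIn) (ESnd (ESnd EIn))).
  set (e := EIfz (eq_gap_expr (EFst (ESnd (ESnd EIn))) (EConst bx))
              (unshift_expr p0 p1 (EFst (ESnd EIn)) (ESnd (ESnd (ESnd EIn)))) (EFst EIn)).
  apply (computable_ext (fun inp => denote e (cpair (f (denote u inp)) inp))).
  - intros inp. unfold e, u, hub_back_fun, eq_gap. autorewrite with denote.
    rewrite !denote_unshift_expr. autorewrite with denote. apply ifz_eqb.
  - apply computable_denote_pair, (computable_comp _ _ (computable_denote u) Hf).
Qed.

Lemma hub_links_of_programs (h o : cantor) c qF qB F B :
  hub_forth c = recf_code qF -> hub_back c = recf_code qB ->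
  (forall i, eval qF [i] (F i)) -> (forall i, eval qB [i] (B i)) ->
  (forall k, o k = h (F (hub_input o c k)) /\ h k = o (B (hub_input o c k))) ->
  hub_links h o c.
Proof.
  intros HcF HcB HF HB Hok k. destruct (Hok k) as [E1 E2].
  split; eexists; (split; [|eassumption]);
    [rewrite HcF; apply eval_halts_with, HF|rewrite HcB; apply eval_halts_with, HB].
Qed.

Lemma takes_both_values (x y : cantor) f d b :
  (forall n, y n = x (f n)) -> x d <> y d -> exists i, x i = b.
Proof.
  intros Hyx Hd. rewrite Hyx in Hd.
  destruct (bool_dec (x d) b); [now exists d|exists (f d)].
  destruct b, (x d), (x (f d)); congruence.
Qed.

Lemma meq_common_neighbour x y d :
  meq x y -> x d <> y d -> exists z, meq_graph x z /\ meq_graph z y.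
Proof.
  intros [[f [Hf Hxy]] [g [Hg Hyx]]] Hd.
  destruct (takes_both_values x y g d false Hyx Hd) as [p0 Hp0].
  destruct (takes_both_values x y g d true Hyx Hd) as [p1 Hp1].
  destruct (leading_ones_exists x) as [cx Hcx]; [now exists p0|].
  destruct (leading_ones_exists y) as [cy Hcy].
  { destruct (takes_both_values y x f d false Hxy (not_eq_sym Hd)) as [i Hi]. now exists i. }
  set (bx := Nat.b2n (x d)).
  destruct (computable_hub_forth_fun bx g Hg) as [qF HqF].
  destruct (computable_hub_back_fun bx p0 p1 f Hf) as [qB HqB].
  set (c := cpair (recf_code qF) (cpair (recf_code qB) (cpair d (cx + cy + 1)))).
  assert (Hc : cx < c /\ cy < c).
  { pose proof (cpair_ge (recf_code qF) (cpair (recf_code qB) (cpair d (cx + cy + 1)))).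
    pose proof (cpair_ge (recf_code qB) (cpair d (cx + cy + 1))).
    pose proof (cpair_ge d (cx + cy + 1)). unfold c. lia. }
  assert (HcF : hub_forth c = recf_code qF) by apply cfst_pair.
  assert (HcB : hub_back c = recf_code qB)
    by (unfold hub_back, c; now rewrite !csnd_pair, cfst_pair).
  assert (Hpos : hub_pos c = d) by (unfold hub_pos, c; now rewrite !csnd_pair, cfst_pair).
  exists (prepend_ones c x). split.
  - exists cx, c. split; auto. split; [apply leading_ones_prepend|]. right. split; [lia|].
    eapply hub_links_of_programs; eauto. intros k.
    unfold hub_input, hub_forth_fun, hub_back_fun. rewrite Hpos. fold bx.
    rewrite !csnd_pair, !cfst_pair, Nat.eqb_refl. split.
    + symmetry. apply prepend_ones_shift.
    + now apply prepend_ones_unshift.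
  - exists c, cy. split; [apply leading_ones_prepend|]. split; auto. left. split; [lia|].
    eapply hub_links_of_programs; eauto. intros k.
    assert (Hb : (Nat.b2n (y d) =? bx) = false).
    { unfold bx. destruct (x d), (y d); simpl; congruence. }
    unfold hub_input, hub_forth_fun, hub_back_fun. rewrite Hpos.
    rewrite !csnd_pair, !cfst_pair, Hb. split.
    + rewrite Hyx. symmetry. apply prepend_ones_shift.
    + rewrite <- Hxy. now apply prepend_ones_unshift.
Qed.

Lemma meq_short_walk x y : meq x y -> exists j, j <= 2 /\ walk meq_graph j x y.
Proof.
  intros Hxy. destruct (classic (x = y)) as [<-|Hne]; [exists 0; split; [lia|reflexivity]|].
  destruct (not_all_ex_not _ _ (fun Hall => Hne (functional_extensionality x y Hall))) as [d Hd].
  destruct (meq_common_neighbour x y d Hxy Hd) as [z [Hxz Hzy]].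
  exists 2. split; auto. exists z. split; auto. now exists y.
Qed.

Lemma connected_meq_graph x y : connected meq_graph x y <-> meq x y.
Proof.
  split.
  - intros [k Hk]. exact (walk_in_preorder _ _ meq_refl meq_trans meq_graph_meq k x y Hk).
  - intros Hxy. destruct (meq_short_walk x y Hxy) as [j [_ Hj]]. now exists j.
Qed.

(** * The diameter is exactly two *)

Definition point1 : cantor := fun i => i =? 1.
Definition point2 : cantor := fun i => i =? 2.

Lemma meq_point1_point2 : meq point1 point2.
Proof.
  split.
  - exists S. split; [|reflexivity]. exists RSucc. intros n. apply ev_succ.
  - exists pred. split; [|now intros [|n]]. exists pred_rf. apply eval_pred_rf.
Qed.

Lemma not_meq_graph_point1_point2 : ~ meq_graph point1 point2.
Proof.
  intros (c1 & c2 & H1 & H2 & Hcase).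
  assert (Hz1 : leading_ones point1 0) by (split; [reflexivity|intros; lia]).
  assert (Hz2 : leading_ones point2 0) by (split; [reflexivity|intros; lia]).
  rewrite <- (leading_ones_unique _ _ _ Hz1 H1), <- (leading_ones_unique _ _ _ Hz2 H2) in Hcase.
  lia.
Qed.

Lemma meq_graph_diameter : diameter meq_graph 2.
Proof.
  split.
  - intros x y Hxy. apply meq_short_walk, connected_meq_graph, Hxy.
  - intros j Hj Hdiam.
    destruct (Hdiam point1 point2) as [[|[|i]] [Hi Hw]];
      [apply connected_meq_graph, meq_point1_point2| | |lia].
    + apply (f_equal (fun p => p 1)) in Hw. discriminate.
    + destruct Hw as [z [Hz ->]]. now apply not_meq_graph_point1_point2.
Qed.

Theorem theorem4p2 : pi02_graphable_diam meq 2.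
Proof.
  exists meq_graph. split; [exact meq_graph_pi02|].
  split; [exact meq_graph_simple|].
  split; [exact connected_meq_graph|exact meq_graph_diameter].
Qed.
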